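(* Let $\psi:\mathbb{N}\to[1,\infty)$ be a function with $\psi(n)\to\infty$ and $\log\psi(n)/\log n\to 0$ as $n\to\infty$, and let $d=d(n)$ be positive integers with $d\geq n/\psi(n)$. Then, as $n\to\infty$, $$p_d(n+1)\geq n^{\big(n+\frac{n\log d}{\psi(n)\log n}\big)(1+o(1))},$$ and consequently, if moreover $\frac{\log d}{\psi(n)\log n}\to 0$ as $n\to\infty$, then $p_d(n)\geq n^{n+o(n)}$.
   Context: $\mathbb{Z}_+=\{0,1,2,\dots\}$. A set $S\subset\mathbb{Z}_+^d$ is a lower set if whenever $\mathbf{x}\in S$ and $\mathbf{x}'\in\mathbb{Z}_+^d$ satisfies $x'_i\leq x_i$ for all $i$, then $\mathbf{x}'\in S$. $p_d(n)$ denotes the number of lower sets in $\mathbb{Z}_+^d$ with exactly $n$ points. $\log$ is the natural logarithm. *)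

From mathcomp Require Import all_boot.
Set Implicit Arguments. Unset Strict Implicit. Unset Printing Implicit Defensive.

Definition box (d n : nat) := {ffun 'I_d -> 'I_n}.

(* Since the box is itself down-closed in Z_+^d, for
   S contained in the box this is exactly the lower-set condition in Z_+^d. *)
Definition is_lower (d n : nat) (S : {set box d n}) : bool :=
  [forall x : box d n, (x \in S) ==>
     [forall y : box d n, [forall i, (y i <= x i)%N] ==> (y \in S)]].

(* Every point x of a lower set of size n satisfies x_i < n (the chain
   x - k e_i, k = 0..x_i, lies in the set), so all such sets live in
   the box {0,...,n-1}^d and we may count them there. *)
Definition p (d n : nat) : nat :=
  #|[set S : {set box d n} | is_lower S && (#|S| == n)]|.

(* Fix k0 ~ n / psi(n) coordinates K0.  A simple graph E on K0 together with k1
   further coordinates K1 gives the lower set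
     {0} U {e_i : i in K0 U K1} U {e_i + e_j : {i, j} in E}
   of 1 + k0 + k1 + |E| points, and distinct choices give distinct sets, so
   p_d(N + 2) >= C(d - k0, k1) * C(C(k0, 2), m) whenever k0 + k1 + m = N + 1.
   With m ~ n (1 - 2 / psi) edges, log C(C(k0, 2), m) >= m log (n / (16 psi^2)),
   which is n log n (1 - o(1)) because log psi = o(log n).  When d >= 4 n the
   k1 = k0 extra coordinates contribute log C(d - k0, k0) >= (n / psi) log (d / (4 n)),
   which is n log d / psi - o(n log n).  All error terms are controlled by a single
   parameter eta that tends to 0. *)

From Stdlib Require Import Reals Lra.
From Coquelicot Require Import Coquelicot.
From mathcomp Require Import all_boot zify.

Set Implicit Arguments.
Unset Strict Implicit.
Unset Printing Implicit Defensive.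

Open Scope nat_scope.

Section GraphLowerSets.

Variables d n : nat.
Implicit Types (K F G : {set 'I_d}) (E : {set {set 'I_d}}).

Definition indicator F : box d n.+2 :=
  [ffun i => if i \in F then Ordinal (isT : 1 < n.+2) else ord0].

Definition is_graph_on K E := E \subset [set F : {set 'I_d} | F \subset K & #|F| == 2].

Definition graph_faces K E := set0 |: ([set [set i] | i in K] :|: E).

Definition graph_lower_set K E : {set box d n.+2} := indicator @: graph_faces K E.

Lemma indicator_inj : injective indicator.
Proof.
move=> F G /ffunP eqFG; apply/setP => i; move: (eqFG i); rewrite !ffunE.
by case: (i \in F); case: (i \in G).
Qed.

Lemma le_indicator F (y : box d n.+2) :
  (forall i, y i <= indicator F i) -> exists2 G : {set 'I_d}, G \subset F & y = indicator G.
Proof.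
move=> le_yF; exists [set i | y i != 0 :> nat].
  apply/subsetP => i; rewrite inE; move: (le_yF i); rewrite ffunE.
  by case: (i \in F) => //; rewrite leqn0 => ->.
apply/ffunP => i; apply: val_inj; move: (le_yF i); rewrite !ffunE inE.
by case: (i \in F); case: (y i) => [[|[|k]] ?].
Qed.

Section Faces.

Variables (K : {set 'I_d}) (E : {set {set 'I_d}}).
Hypothesis graphE : is_graph_on K E.

Lemma edge_of_graph F : F \in E -> (F \subset K) && (#|F| == 2).
Proof. by move=> EF; have := subsetP graphE F EF; rewrite inE. Qed.

Lemma mem_graph_faces F :
  (F \in graph_faces K E) = (F \subset K) && ((#|F| <= 1) || (F \in E)).
Proof.
rewrite !inE; apply/idP/idP.
- case/or3P => [/eqP-> | /imsetP[i Ki ->] | EF]; first by rewrite sub0set cards0.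
    by rewrite sub1set Ki cards1.
  by case/andP: (edge_of_graph EF) => ->; rewrite EF orbT.
- case/andP => sFK /orP[|->]; last by rewrite !orbT.
  rewrite leq_eqVlt ltnS leqn0 => /orP[/cards1P[i defF] | /eqP/cards0_eq->].
    by rewrite defF imset_f ?orbT // -sub1set -defF.
  by rewrite eqxx.
Qed.

Lemma graph_faces_sub F G :
  F \in graph_faces K E -> G \subset F -> G \in graph_faces K E.
Proof.
rewrite !mem_graph_faces => /andP[sFK cardF] sGF.
rewrite (subset_trans sGF sFK) /=; case: leqP => //= cardG.
case/orP: cardF => [cardF | EF].
  by have := leq_trans (subset_leq_card sGF) cardF; rewrite leqNgt cardG.
case/andP: (edge_of_graph EF) => _ /eqP cardF.
suff -> : G = F by [].
by apply/eqP; rewrite eqEcard sGF cardF.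
Qed.

Lemma card_graph_faces : #|graph_faces K E| = 1 + #|K| + #|E|.
Proof.
have singletonsE : [set [set i] | i in K] :&: E = set0.
  apply/setP => F; rewrite !inE; apply/negP => /andP[/imsetP[i _ ->] /edge_of_graph].
  by rewrite cards1 andbF.
have set0_not_face : set0 \notin [set [set i] | i in K] :|: E.
  rewrite !inE negb_or; apply/andP; split.
    by apply/imsetP => -[i _ /esym/eqP]; rewrite -cards_eq0 cards1.
  by apply/negP => /edge_of_graph; rewrite cards0 andbF.
rewrite cardsU1 set0_not_face cardsU singletonsE cards0 subn0.
by rewrite card_imset ?addnA //; apply: set1_inj.
Qed.

Lemma graph_lower_set_is_lower : is_lower (graph_lower_set K E).
Proof.
apply/forallP => x; apply/implyP => /imsetP[F faceF ->].
apply/forallP => y; apply/implyP => /forallP le_yF.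
have [G sGF ->] := le_indicator le_yF.
by rewrite imset_f // (graph_faces_sub faceF).
Qed.

Lemma card_graph_lower_set : #|graph_lower_set K E| = 1 + #|K| + #|E|.
Proof. by rewrite card_imset ?card_graph_faces //; apply: indicator_inj. Qed.

End Faces.

Lemma graph_lower_set_inj K E K' E' : is_graph_on K E -> is_graph_on K' E' ->
  graph_lower_set K E = graph_lower_set K' E' -> K = K' /\ E = E'.
Proof.
move=> graphE graphE' /(imset_inj indicator_inj) eq_faces.
have vertices K1 E1 : is_graph_on K1 E1 -> K1 = [set i | [set i] \in graph_faces K1 E1].
  by move=> graphE1; apply/setP => i; rewrite inE mem_graph_faces // sub1set cards1 andbT.
have edges K1 E1 : is_graph_on K1 E1 ->
    E1 = [set F in graph_faces K1 E1 | #|F| == 2].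
  move=> graphE1; apply/setP => F; rewrite inE mem_graph_faces //.
  case EF: (F \in E1); first by case/andP: (edge_of_graph graphE1 EF) => -> ->; rewrite orbT.
  by rewrite orbF andbC; case: eqP => // ->; rewrite andbF.
split; first by rewrite (vertices _ _ graphE) (vertices _ _ graphE') eq_faces.
by rewrite (edges _ _ graphE) (edges _ _ graphE') eq_faces.
Qed.

Lemma graph_count_leq_p k0 k1 m : k0 <= d -> k0 + k1 + m = n.+1 ->
  'C(d - k0, k1) * 'C('C(k0, 2), m) <= p d n.+2.
Proof.
move=> k0_le_d sum_k.
have : 0 < #|[set K : {set 'I_d} | #|K| == k0]| by rewrite card_draws card_ord bin_gt0.
case/card_gt0P => K0; rewrite inE => /eqP cardK0.
pose pairs := [set F : {set 'I_d} | F \subset K0 & #|F| == 2].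
pose D1 := [set K1 : {set 'I_d} | K1 \subset ~: K0 & #|K1| == k1].
pose D2 := [set E : {set {set 'I_d}} | E \subset pairs & #|E| == m].
have graph_in q : q \in setX D1 D2 -> is_graph_on (K0 :|: q.1) q.2.
  case: q => K1 E; rewrite !inE /= => /andP[_ /andP[sEpairs _]].
  apply: subset_trans sEpairs _; apply/subsetP => F; rewrite !inE => /andP[sFK0 ->].
  by rewrite andbT (subset_trans sFK0) ?subsetUl.
pose f q := graph_lower_set (K0 :|: q.1) q.2.
have f_inj : {in setX D1 D2 &, injective f}.
  move=> [K1 E] [K1' E'] q_in q'_in.
  case/(graph_lower_set_inj (graph_in _ q_in) (graph_in _ q'_in)) => /= eqK ->.
  congr (_, _).
  move: q_in q'_in; rewrite !inE /= => /andP[/andP[sK1 _] _] /andP[/andP[sK1' _] _].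
  have outside K2 : K2 \subset ~: K0 -> K2 = (K0 :|: K2) :&: ~: K0.
    by move=> sK2; rewrite setIUl setICr set0U; apply/esym/setIidPl.
  by rewrite (outside _ sK1) (outside _ sK1') eqK.
have <- : #|setX D1 D2| = 'C(d - k0, k1) * 'C('C(k0, 2), m).
  by rewrite cardsX !cards_draws -cardK0 cardsCs setCK card_ord.
rewrite -(card_in_imset f_inj); apply: subset_leq_card.
apply/subsetP => _ /imsetP[[K1 E] q_in ->]; have graphE := graph_in _ q_in.
move: q_in; rewrite !inE /= => /andP[/andP[sK1 /eqP cardK1] /andP[_ /eqP cardE]].
rewrite graph_lower_set_is_lower //= card_graph_lower_set // cardsU cardK0 cardK1 cardE.
rewrite disjoint_setI0 ?cards0 /=; last by rewrite disjoint_sym -[K0]setCK -subsets_disjoint.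
apply/eqP; lia.
Qed.

End GraphLowerSets.

Lemma expn_subn_leq_ffact a b : (a - b) ^ b <= a ^_ b.
Proof.
rewrite ffact_prod -[X in _ ^ X](card_ord b) -prod_nat_const.
by apply: leq_prod => i _; rewrite leq_sub2l // ltnW.
Qed.

Lemma fact_leq_expn b : b`! <= b ^ b.
Proof.
rewrite -ffactnn ffact_prod -[X in _ ^ X](card_ord b) -prod_nat_const.
by apply: leq_prod => i _; rewrite leq_subr.
Qed.

Lemma expn_subn_leq_bin a b : (a - b) ^ b <= 'C(a, b) * b ^ b.
Proof.
apply: leq_trans (expn_subn_leq_ffact a b) _.
by rewrite -bin_ffact leq_mul2l fact_leq_expn orbT.
Qed.

Open Scope R_scope.

Lemma INR_muln a b : INR (a * b) = INR a * INR b.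
Proof. exact: mult_INR. Qed.

Lemma INR_expn a b : INR (a ^ b) = INR a ^ b.
Proof. by elim: b => [//|b IHb]; rewrite expnS INR_muln IHb. Qed.

Lemma INR_subn a b : (b <= a)%N -> INR (a - b) = INR a - INR b.
Proof. by move/leP; apply: minus_INR. Qed.

Lemma INR_leq a b : (a <= b)%N -> INR a <= INR b.
Proof. by move/leP; apply: le_INR. Qed.

Lemma exp_le_exp x y : x <= y -> exp x <= exp y.
Proof. by case/Rle_lt_or_eq => [/exp_increasing/Rlt_le | ->]; last exact: Rle_refl. Qed.

Lemma ln_INR_ge0 k : (0 < k)%N -> 0 <= ln (INR k).
Proof. by move=> k_pos; rewrite -ln_1; apply: ln_le; [lra | apply: (INR_leq (a := 1))]. Qed.

Lemma pow_div_le_bin a b : (INR (a - b) / INR b) ^ b <= INR 'C(a, b).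
Proof.
case: b => [|b]; first by rewrite bin0 /=; lra.
have b_pos : 0 < INR b.+1 by apply: lt_0_INR; lia.
apply: (Rmult_le_reg_r (INR b.+1 ^ b.+1)); first exact: pow_lt.
rewrite -Rpow_mult_distr -INR_expn -INR_muln.
have -> : INR (a - b.+1) / INR b.+1 * INR b.+1 = INR (a - b.+1) by field; lra.
by rewrite -INR_expn; apply/INR_leq/expn_subn_leq_bin.
Qed.

Lemma exp_le_bin a b r x : 0 < r -> r <= INR (a - b) / INR b ->
  x <= INR b * ln r -> exp x <= INR 'C(a, b).
Proof.
move=> r_pos r_le x_le; apply: Rle_trans (pow_div_le_bin a b).
apply: Rle_trans (exp_le_exp x_le) _.
rewrite -ln_pow // exp_ln; last exact: pow_lt.
by apply: pow_incr; lra.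
Qed.

Lemma exists_nat_between r D : 0 <= r <= INR D ->
  exists2 k, (k <= D)%N & r <= INR k <= r + 1.
Proof.
move=> [r_ge0 r_le_D]; case: (Rle_lt_dec (INR D) (r + 1)) => [D_le | lt_D].
  by exists D => //; split.
have [k [k_le r_lt]] := nfloor_ex r r_ge0.
exists k.+1; last by rewrite S_INR; split; lra.
by apply/leP/INR_le; rewrite S_INR; lra.
Qed.

Lemma exp_le_bin_extra_vertices (D k n : nat) (y : R) : (0 < D)%N -> 0 < y -> y <= INR k ->
  (k <= n)%N -> exists2 k1, (k1 <= k)%N &
    exp (y * (ln (INR D) - ln (4 * INR n))) <= INR 'C(D - k, k1).
Proof.
move=> D_pos y_pos y_le_k k_le_n.
have n_ge_k := INR_leq k_le_n.
have D_ge1 : 1 <= INR D by apply: (INR_leq (a:=1)).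
case: (Rle_lt_dec (INR D) (4 * INR n)) => [D_le | lt_D].
  exists 0%N => //; rewrite bin0 /= -exp_0; apply: exp_le_exp.
  have : ln (INR D) <= ln (4 * INR n) by apply: ln_le; lra.
  nra.
exists k => //.
have k_le_D : (k + k <= D)%N by apply/leP/INR_le; rewrite plus_INR; lra.
apply: (exp_le_bin (r := INR D / (4 * INR n))).
- by apply: Rdiv_lt_0_compat; lra.
- rewrite -subnDA INR_subn // plus_INR.
  have u_pos : 0 < INR D / (4 * INR n) by apply: Rdiv_lt_0_compat; lra.
  have u_n : INR D / (4 * INR n) * INR n = INR D / 4 by field; lra.
  have u_k : INR D / (4 * INR n) * INR k <= INR D / (4 * INR n) * INR n.
    by apply: Rmult_le_compat_l; lra.
  apply (Rle_div_r _ _ (INR k)); lra.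
- rewrite ln_div; try lra.
  apply: Rmult_le_compat_r => //.
  have : ln (4 * INR n) <= ln (INR D) by apply: ln_le; lra.
  lra.
Qed.

Lemma INR_bin2 k : 2 * INR 'C(k, 2) = INR k * (INR k - 1).
Proof.
case: k => [|k]; first by rewrite bin0n /=; ring.
have := bin_ffact k.+1 2; rewrite ffactnS ffactn1 succnK => /(congr1 INR).
by rewrite !INR_muln !S_INR /=; lra.
Qed.

Lemma ln_4_pos : 0 < ln 4.
Proof. by rewrite -ln_1; apply: ln_increasing; lra. Qed.

Section Regime.

Variables (n : nat) (psi eta : R).
Hypotheses (eta_pos : 0 < eta) (eta_le : eta <= 1 / 9) (psi_ge : 1 / eta <= psi)
  (ln_psi_le : ln psi <= eta * ln (INR n)) (n_ge : 3 <= eta * INR n)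
  (ln4_le : ln 4 <= eta * ln (INR n)).

Local Notation L := (ln (INR n)).
Local Notation y := (INR n / psi).

Lemma psi_ge9 : 9 <= psi.
Proof. have : 9 <= 1 / eta by apply Rle_div_r; lra. lra. Qed.

Lemma n_ge27 : 27 <= INR n.
Proof. nra. Qed.

Lemma ln_n_pos : 0 < L.
Proof. have := ln_4_pos; nra. Qed.

Lemma y_le_eta_n : y <= eta * INR n.
Proof.
have psi_pos := psi_ge9.
have eta_psi : 1 <= eta * psi.
  have := Rmult_le_compat_l _ _ _ (Rlt_le _ _ eta_pos) psi_ge.
  by rewrite /Rdiv Rmult_1_l Rinv_r; lra.
apply Rle_div_l; nra.
Qed.

Lemma sq_psi_le : 16 * psi ^ 2 <= INR n.
Proof.
have psi_pos := psi_ge9; have L_pos := ln_n_pos.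
apply: Rnot_lt_le => lt_n.
have := ln_increasing _ _ (ltac:(nra) : 0 < INR n) lt_n.
rewrite (_ : 16 * psi ^ 2 = (4 * psi) * (4 * psi)); last by ring.
rewrite ln_mult ?(ln_mult 4 psi); nra.
Qed.

Lemma exp_le_bin_edges k0 m : y <= INR k0 -> (1 - 3 * eta) * INR n <= INR m ->
  (m <= n)%N -> exp ((1 - 7 * eta) * (INR n * L)) <= INR 'C('C(k0, 2), m).
Proof.
move=> y_le_k0 m_ge /INR_leq m_le.
move: psi_ge9 n_ge27 ln_n_pos sq_psi_le => psi9 n27 L_pos sq_le.
have y_psi : y * psi = INR n by field; lra.
have y_ge : 16 * psi <= y.
  by apply: (Rmult_le_reg_r psi); [lra | rewrite y_psi /=; lra].
have bin2_ge : y ^ 2 / 4 <= INR 'C(k0, 2) by have := INR_bin2 k0; nra.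
have n_le : INR n <= y ^ 2 / 16 by nra.
have m_le_bin2 : (m <= 'C(k0, 2))%N by apply/leP/INR_le; lra.
have m_pos : 0 < INR m by nra.
set r := INR n / (16 * psi ^ 2).
have r_n : r * INR n = y ^ 2 / 16 by rewrite /r; field; lra.
have ln_r : ln r = L - 2 * ln 4 - 2 * ln psi.
  rewrite /r ln_div ?(ln_mult 16) ?ln_pow //; try nra.
  by rewrite (_ : 16 = 4 * 4); [rewrite ln_mult /=; lra | ring].
have r_pos : 0 < r by rewrite /r; apply: Rdiv_lt_0_compat; nra.
have r_m : r * INR m <= r * INR n by apply: Rmult_le_compat_l; lra.
apply: (exp_le_bin (r := r)) => //.
  by rewrite INR_subn //; apply (Rle_div_r _ _ (INR m)); lra.
have ln_r_ge : (1 - 4 * eta) * L <= ln r by rewrite ln_r; lra.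
have m_ge0 : 0 <= (1 - 3 * eta) * INR n by nra.
have ln_r_ge0 : 0 <= (1 - 4 * eta) * L by nra.
have := Rmult_le_compat _ _ _ _ m_ge0 ln_r_ge0 m_ge ln_r_ge.
have : 0 <= eta * eta * (INR n * L) by apply: Rmult_le_pos; nra.
nra.
Qed.

Lemma exp_mul_bin_le_p D N k0 k1 : (n <= N.+2 <= n.+1)%N -> y <= INR k0 <= y + 1 ->
  (k0 <= D)%N -> (k1 <= k0)%N ->
  exp ((1 - 7 * eta) * (INR n * L)) * INR 'C(D - k0, k1) <= INR (p D N.+2).
Proof.
move=> /andP[N_ge N_le] [k0_ge k0_le] k0_le_D k1_le.
have := INR_leq N_ge; have := INR_leq k1_le; rewrite !S_INR => k1_R N_R.
move: n_ge27 y_le_eta_n => n27 y_le.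
have eta_n : eta * INR n <= INR n / 9 by nra.
have k01_le : (k0 + k1 <= N.+1)%N by apply/leP/INR_le; rewrite plus_INR S_INR; lra.
have sum_k : (k0 + k1 + (N.+1 - (k0 + k1)) = N.+1)%N by rewrite subnKC.
have m_R : INR (N.+1 - (k0 + k1)) = INR N + 1 - INR k0 - INR k1.
  by rewrite INR_subn // S_INR plus_INR; ring.
apply: Rle_trans (INR_leq (graph_count_leq_p k0_le_D sum_k)).
rewrite INR_muln Rmult_comm; apply: Rmult_le_compat_l; first exact: pos_INR.
apply: exp_le_bin_edges => //; first by rewrite m_R; lra.
lia.
Qed.

Lemma exists_core_size D : y <= INR D ->
  exists2 k0, (k0 <= D)%N & y <= INR k0 <= y + 1.
Proof.
move=> y_le_D; apply: exists_nat_between; split => //.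
by apply: Rlt_le; apply: Rdiv_lt_0_compat; move: n_ge27 psi_ge9; lra.
Qed.

Lemma exp_le_p D : y <= INR D -> exp ((1 - 7 * eta) * (INR n * L)) <= INR (p D n).
Proof.
move=> /exists_core_size[k0 k0_le_D k0_between].
have n_ge2 : (2 <= n)%N by apply/leP/INR_le; have := n_ge27; rewrite /= ; lra.
have eq_n : (n - 2).+2 = n by rewrite -addn2 subnK.
have range : (n <= (n - 2).+2 <= n.+1)%N by rewrite eq_n leqnn leqnSn.
have := exp_mul_bin_le_p range k0_between k0_le_D (leq0n k0).
by rewrite eq_n bin0 Rmult_1_r.
Qed.

Lemma exp_le_p_succ D : y <= INR D -> (0 < D)%N ->
  exp ((1 - 9 * eta) * (INR n * L + INR n * ln (INR D) / psi)) <= INR (p D n.+1).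
Proof.
move=> y_le_D D_pos; have [k0 k0_le_D [k0_ge k0_le]] := exists_core_size y_le_D.
move: n_ge27 psi_ge9 ln_n_pos y_le_eta_n => n27 psi9 L_pos y_le.
have y_pos : 0 < y by apply: Rdiv_lt_0_compat; lra.
have k0_le_n : (k0 <= n)%N by apply/leP/INR_le; nra.
have [k1 k1_le spread] := exp_le_bin_extra_vertices D_pos y_pos k0_ge k0_le_n.
have n_pos : (0 < n)%N by apply/ltP/INR_lt; rewrite /=; lra.
have eq_n : (n - 1).+2 = n.+1 by lia.
have range : (n <= (n - 1).+2 <= n.+1)%N by rewrite eq_n leqnSn leqnn.
have := exp_mul_bin_le_p range (conj k0_ge k0_le) k0_le_D k1_le; rewrite eq_n.
apply: Rle_trans.
apply: Rle_trans (Rmult_le_compat_l _ _ _ (Rlt_le _ _ (exp_pos _)) spread).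
rewrite -exp_plus; apply: exp_le_exp.
have lnD_ge0 := ln_INR_ge0 D_pos.
have -> : INR n * ln (INR D) / psi = y * ln (INR D) by field; lra.
have y_ln4n : y * ln (4 * INR n) <= eta * INR n * (2 * L).
  have := ln_4_pos; rewrite ln_mult; try lra.
  by move=> ln4_pos; apply: Rmult_le_compat; nra.
have : 0 <= eta * (y * ln (INR D)) by apply: Rmult_le_pos; nra.
nra.
Qed.

End Regime.

Lemma eventually_regime (psi : nat -> R) eta : 0 < eta ->
  is_lim_seq psi p_infty -> is_lim_seq (fun n => ln (psi n) / ln (INR n)) 0 ->
  eventually (fun n => 1 / eta <= psi n /\ ln (psi n) <= eta * ln (INR n) /\
    3 <= eta * INR n /\ ln 4 <= eta * ln (INR n)).
Proof.
move=> eta_pos /is_lim_seq_spec psi_inf /is_lim_seq_spec psi_slow.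
have /is_lim_seq_spec n_inf := is_lim_seq_INR.
apply: filter_imp (filter_and _ _ (psi_slow (mkposreal eta eta_pos))
  (filter_and _ _ (psi_inf (1 / eta)) (n_inf (3 / eta + exp (ln 4 / eta))))).
move=> n /= [slow [psi_big n_big]].
have pos3 : 0 < 3 / eta by apply: Rdiv_lt_0_compat; lra.
have pos_exp := exp_pos (ln 4 / eta).
have ln_n_big : ln 4 / eta < ln (INR n).
  by rewrite -[ln 4 / eta]ln_exp; apply: ln_increasing; lra.
have L_pos : 0 < ln (INR n) by have := Rdiv_lt_0_compat _ _ ln_4_pos eta_pos; lra.
split; first lra.
split.
  have : ln (psi n) / ln (INR n) < eta by move: slow; rewrite Rminus_0_r => /Rabs_def2; lra.
  by move/(Rlt_div_l _ _ _ L_pos); lra.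
split; last by move/(Rlt_div_l _ _ _ eta_pos): ln_n_big; lra.
have /(Rlt_div_l _ _ _ eta_pos) : 3 / eta < INR n by lra.
lra.
Qed.

Lemma vanishing_exponent_error (A P : nat -> R) :
  eventually (fun n => 0 < A n) ->
  (forall delta, 0 < delta ->
     eventually (fun n => exp ((1 - delta) * (A n * ln (INR n))) <= P n)) ->
  exists eps : nat -> R, is_lim_seq eps 0 /\
    eventually (fun n => Rpower (INR n) (A n * (1 + eps n)) <= P n).
Proof.
move=> A_pos lower.
have AL_pos : eventually (fun n => 0 < A n * ln (INR n)).
  have n_ge2 : eventually (fun n => 2 <= INR n) by exists 2%N => n; apply: (le_INR 2).
  apply: filter_imp (filter_and _ _ A_pos n_ge2) => n [A_n_pos n_ge2'].
  apply: Rmult_lt_0_compat => //.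
  by rewrite -ln_1; apply: ln_increasing; lra.
pose ratio n := ln (P n) / (A n * ln (INR n)).
have ratio_ge delta : 0 < delta -> eventually (fun n =>
    0 < A n * ln (INR n) /\ 0 < P n /\ 1 - delta <= ratio n).
  move=> delta_pos; apply: filter_imp (filter_and _ _ AL_pos (lower _ delta_pos)).
  move=> n [AL low]; have P_pos : 0 < P n by apply: Rlt_le_trans (exp_pos _) low.
  do 2![split => //]; apply Rle_div_r => //.
  by rewrite -[X in X <= _]ln_exp; apply: ln_le; first exact: exp_pos.
exists (fun n => Rmin 0 (ratio n - 1)); split.
  apply/is_lim_seq_spec => e; have half_e : 0 < e / 2 by have := cond_pos e; lra.
  apply: filter_imp (ratio_ge _ half_e) => n [_ [_ ratio_n]] /=.
  have := Rmin_l 0 (ratio n - 1); have : - (e / 2) <= Rmin 0 (ratio n - 1).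
    by apply: Rmin_glb; lra.
  by move=> ? ?; rewrite Rminus_0_r Rabs_left1; lra.
apply: filter_imp (ratio_ge 1 Rlt_0_1) => n [AL [P_pos _]].
rewrite /Rpower -[X in _ <= X](exp_ln _ P_pos); apply: exp_le_exp.
have := Rmin_r 0 (ratio n - 1).
have ratio_AL : ratio n * (A n * ln (INR n)) = ln (P n).
  by rewrite /ratio /Rdiv Rmult_assoc Rinv_l ?Rmult_1_r //; lra.
rewrite -ratio_AL; nra.
Qed.

Lemma eventually_exp_le_p (psi : nat -> R) (d : nat -> nat) :
  is_lim_seq psi p_infty -> is_lim_seq (fun n => ln (psi n) / ln (INR n)) 0 ->
  (forall n, (0 < d n)%N) -> (forall n, INR n / psi n <= INR (d n)) ->
  forall delta, 0 < delta -> eventually (fun n =>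
    exp ((1 - delta) * (INR n * ln (INR n) + INR n * ln (INR (d n)) / psi n))
      <= INR (p (d n) n.+1) /\
    exp ((1 - delta) * (INR n * ln (INR n))) <= INR (p (d n) n)).
Proof.
move=> psi_inf psi_slow d_pos d_big delta delta_pos.
have [eta [eta_pos eta_le eta_delta]] :
    exists eta, [/\ 0 < eta, eta <= 1 / 9 & 1 - delta <= 1 - 9 * eta].
  exists (Rmin (delta / 9) (1 / 9)); split; first by apply: Rmin_pos; lra.
    exact: Rmin_r.
  by have := Rmin_l (delta / 9) (1 / 9); lra.
apply: filter_imp (eventually_regime eta_pos psi_inf psi_slow).
move=> n [psi_ge [ln_psi_le [n_ge ln4_le]]].
have L_pos := ln_n_pos eta_pos eta_le ln4_le.
have psi9 := psi_ge9 eta_pos eta_le psi_ge.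
have lnD_ge0 := ln_INR_ge0 (d_pos n).
have nL_ge0 : 0 <= INR n * ln (INR n) by apply: Rmult_le_pos; [apply: pos_INR | lra].
have nlnD_ge0 : 0 <= INR n * ln (INR (d n)) / psi n.
  by apply: Rle_mult_inv_pos; [apply: Rmult_le_pos; [apply: pos_INR | lra] | lra].
split.
  apply: Rle_trans (exp_le_p_succ eta_pos eta_le psi_ge ln_psi_le n_ge ln4_le
    (d_big n) (d_pos n)).
  by apply: exp_le_exp; apply: Rmult_le_compat_r; lra.
apply: Rle_trans (exp_le_p eta_pos eta_le psi_ge ln_psi_le n_ge ln4_le (d_big n)).
by apply: exp_le_exp; apply: Rmult_le_compat_r; lra.
Qed.

(* Reimporting Peano gives back the Stdlib meaning of [<=] and [<] on [nat],
   in which the statement below is written. *)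
Import Corelib.Init.Peano.
Open Scope R_scope.

Theorem proposition3
  (psi : nat -> R) (d : nat -> nat)
  (psi_ge1 : forall n : nat, 1 <= psi n)
  (psi_inf : is_lim_seq psi p_infty)
  (psi_slow : is_lim_seq (fun n => ln (psi n) / ln (INR n)) 0)
  (d_pos : forall n : nat, (0 < d n)%nat)
  (d_big : forall n : nat, INR n / psi n <= INR (d n)) :
  (exists eps : nat -> R, is_lim_seq eps 0 /\
     exists N : nat, forall n : nat, (N <= n)%nat ->
       Rpower (INR n)
         ((INR n + INR n * ln (INR (d n)) / (psi n * ln (INR n))) * (1 + eps n))
       <= INR (p (d n) (S n)))
  /\
  (is_lim_seq (fun n => ln (INR (d n)) / (psi n * ln (INR n))) 0 ->
   exists eps : nat -> R, is_lim_seq eps 0 /\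
     exists N : nat, forall n : nat, (N <= n)%nat ->
       Rpower (INR n) (INR n + eps n * INR n) <= INR (p (d n) n)).
Proof.
have lower := eventually_exp_le_p psi_inf psi_slow (fun n => introT ltP (d_pos n)) d_big.
have n_ge2 : eventually (fun n => 2 <= INR n) by exists 2%nat => n; apply: (le_INR 2).
have L_pos : eventually (fun n => 0 < ln (INR n)).
  by apply: filter_imp n_ge2 => n n2; rewrite -ln_1; apply: ln_increasing; lra.
split.
  apply: vanishing_exponent_error.
    apply: filter_imp (filter_and _ _ n_ge2 L_pos) => n [n2 L_n_pos].
    have lnD_ge0 := ln_INR_ge0 (introT ltP (d_pos n)).
    apply: Rplus_lt_le_0_compat; first lra.
    apply: Rle_mult_inv_pos; first by apply: Rmult_le_pos; lra.
    by apply: Rmult_lt_0_compat => //; have := psi_ge1 n; lra.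
  move=> delta /lower low.
  apply: filter_imp (filter_and _ _ low L_pos) => n [[succ _] L_n_pos].
  rewrite (_ : _ * ln (INR n) = INR n * ln (INR n) + INR n * ln (INR (d n)) / psi n) //.
  by field; have := psi_ge1 n; lra.
(* The bound on [p (d n) n] needs no hypothesis on the growth of [d]. *)
move=> _.
case: (vanishing_exponent_error (A := INR) (P := fun n => INR (p (d n) n))).
- by apply: filter_imp n_ge2 => n; lra.
- by move=> delta /lower; apply: filter_imp => n [].
move=> eps [eps_lim eps_bound]; exists eps; split => //.
apply: filter_imp eps_bound => n.
by rewrite (_ : INR n + _ = INR n * (1 + eps n)) //; ring.
Qed.
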